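(* Let $p,q\in(0,\infty]$ with $\min\{p,q\}<\infty$. Then the embedding operator $I\colon\ell^{p,q}\to c_0$ is maximally non-compact, i.e. $\alpha(I)=\|I\|$.
   Context: For a scalar sequence $a=(a_n)$, its decreasing rearrangement is $a^*_n=\inf\{\omega>0:\#\{k:|a_k|>\omega\}\le n-1\}$. For $p,q\in(0,\infty]$, the Lorentz sequence space $\ell^{p,q}$ consists of all sequences $a$ with $\|a\|_{p,q}<\infty$, where $\|a\|_{p,q}=\big(\sum_{n=1}^\infty (a_n^* )^q n^{q/p-1}\big)^{1/q}$ if $q<\infty$, and $\|a\|_{p,\infty}=\sup_{n}n^{1/p}a_n^*$; convention $1/\infty=0$. $c_0$ is the space of sequences converging to $0$ with the sup norm. For a bounded map $T\colon X\to Y$ with closed unit balls $B_X,B_Y$, the ball measure of non-compactness is $\alpha(T)=\inf\{r>0:\ T(B_X)\subset\bigcup_{i=1}^m (y_i+rB_Y)\text{ for some } m\in\mathbb{N},\ y_i\in Y\}$, $\|T\|=\sup_{x\in B_X}\|Tx\|$, and $T$ is maximally non-compact if $\alpha(T)=\|T\|$. *)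

From HB Require Import structures.
From mathcomp Require Import all_boot all_order all_algebra.
From mathcomp Require Import all_classical all_reals all_analysis.
Set Implicit Arguments. Unset Strict Implicit. Unset Printing Implicit Defensive.
Import Order.TTheory GRing.Theory Num.Theory.
Import numFieldNormedType.Exports.
Local Open Scope classical_set_scope.
Local Open Scope ring_scope.

Section Lorentz.
Variable R : realType.

(* #{k : |a_k| > w} <= m : the set is contained in a list of length <= m *)
Definition count_gt_le (a : nat -> R) (w : R) (m : nat) : Prop :=
  exists s : seq nat, (size s <= m)%N /\ [set k | w < `|a k|] `<=` [set` s].

(* decreasing rearrangement a^*_n (meaningful for n >= 1), value in [0,+oo] *)
Definition decr_rearr (a : nat -> R) (n : nat) : \bar R :=
  ereal_inf [set w%:E | w in [set w : R | 0 < w /\ count_gt_le a w n.-1]].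

Definition einv (p : \bar R) : R :=
  match p with +oo%E => 0 | _ => (fine p)^-1 end.

Definition lorentz_norm (p q : \bar R) (a : nat -> R) : \bar R :=
  match q with
  | +oo%E => ereal_sup [set ((n%:R `^ einv p)%:E * decr_rearr a n)%E
                         | n in [set n : nat | (1 <= n)%N]]
  | _ => let r := fine q in
      poweR (\sum_(1 <= n <oo) (poweR (decr_rearr a n) r
                                * (n%:R `^ (r * einv p - 1))%:E))%E r^-1
  end.

Definition lorentz_space (p q : \bar R) : set (nat -> R) :=
  [set a | (lorentz_norm p q a < +oo)%E].

Definition lorentz_ball (p q : \bar R) : set (nat -> R) :=
  [set a | (lorentz_norm p q a <= 1)%E].

Definition c0 : set (nat -> R) := [set a | a @ \oo --> 0].

Definition supnorm (a : nat -> R) : \bar R := ereal_sup (range (fun k => (`|a k|)%:E)).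

Definition embed_norm (p q : \bar R) : \bar R :=
  ereal_sup [set supnorm a | a in lorentz_ball p q].

Definition embed_alpha (p q : \bar R) : \bar R :=
  ereal_inf [set r%:E | r in [set r : R | 0 < r /\
     exists ys : seq (nat -> R), (forall y, y \in ys -> c0 y) /\
       forall a, lorentz_ball p q a ->
         exists2 y, y \in ys & exists b, c0 b /\ (supnorm b <= 1)%E /\
                                         a = y + r *: b]].
End Lorentz.

(* Every a in the unit ball of l^{p,q} satisfies |a_k| <= a^*_1 <= 1, and the
   unit vectors lie in that ball, so ||I|| = 1; when min(p,q) < oo the ball also
   lies in c0, since a^*_n -> 0 (by divergence of the harmonic series if q < oo,
   by a^*_n <= n^{-1/p} if q = oo), so the single ball of radius 1 around 0 covers
   it and alpha(I) <= 1.  Conversely, finitely many centres in c0 are all below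
   1 - r at some coordinate N, and then the unit vector e_N is not within r of
   any of them, so alpha(I) >= 1. *)
From mathcomp Require Import all_boot all_order all_algebra.
From mathcomp Require Import all_classical all_reals all_analysis.
Import Order.TTheory GRing.Theory Num.Theory.
Import numFieldNormedType.Exports.
Set Implicit Arguments. Unset Strict Implicit. Unset Printing Implicit Defensive.
Local Open Scope classical_set_scope.
Local Open Scope ring_scope.

Section DecreasingRearrangement.
Variable R : realType.
Implicit Types (a : nat -> R) (n : nat).
Local Open Scope ereal_scope.

Lemma decr_rearr_ge0 a n : 0 <= decr_rearr a n.
Proof. by apply/ereal_infP => _ [w [w0 _] <-]; rewrite lee_fin ltW. Qed.

Lemma decr_rearr_le a n (w : R) :
  (0 < w)%R -> count_gt_le a w n.-1 -> decr_rearr a n <= w%:E.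
Proof. by move=> w0 aw; apply: ereal_inf_lbound; exists w. Qed.

Lemma decr_rearr_ltP a n (e : R) : decr_rearr a n < e%:E ->
  exists w, [/\ 0 < w, w < e & count_gt_le a w n.-1]%R.
Proof. by case/ereal_inf_lt => _ [w [w0 aw] <-]; rewrite lte_fin; exists w. Qed.

Lemma norm_le_decr_rearr1 a k : (`|a k|)%:E <= decr_rearr a 1.
Proof.
apply/ereal_infP => _ [w [_ [s [+ aws]]] <-]; rewrite leqn0 => /nilP s0.
by rewrite lee_fin leNgt; apply/negP => /aws; rewrite s0.
Qed.

Lemma decr_rearr1_le a (M : R) :
  (0 < M)%R -> (forall k, `|a k| <= M)%R -> decr_rearr a 1 <= M%:E.
Proof.
move=> M0 aM; apply: decr_rearr_le => //; exists [::]; split => // k /=.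
by rewrite ltNge aM.
Qed.

Lemma decr_rearr_finite_support a (s : seq nat) n :
  (forall k, k \notin s -> a k = 0%R) -> (size s < n)%N -> decr_rearr a n = 0.
Proof.
move=> as0 sn; apply/eqP; rewrite eq_le decr_rearr_ge0 andbT.
apply/lee_addgt0Pr => e e0; rewrite add0e; apply: decr_rearr_le => //.
exists s; split; first by rewrite -ltnS prednK // (leq_ltn_trans _ sn).
move=> k /= ek; apply: contrapT => /negP ks.
by move: ek; rewrite as0 // normr0 ltNge ltW.
Qed.

Lemma c0_decr_rearr_lt a :
  (forall e : R, (0 < e)%R -> exists n, decr_rearr a n < e%:E) -> c0 a.
Proof.
move=> small; apply/cvgr0Pnorm_lt => e e0.
have [n an] := small e e0; have [w [w0 we [s [_ aws]]]] := decr_rearr_ltP an.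
near=> k; rewrite (le_lt_trans _ we)// leNgt; apply/negP => /aws /= ks.
suff : (k <= \max_(i <- s) i)%N.
  by apply/negP; rewrite -ltnNge; near: k; exact: nbhs_infty_gt.
exact: (@leq_bigmax_seq _ s xpredT id k ks).
Unshelve. all: by end_near.
Qed.

End DecreasingRearrangement.

Section Powers.
Variable R : realType.

Lemma powR_le1 (x r : R) : 0 < r -> 0 <= x -> (x `^ r <= 1) = (x <= 1).
Proof.
move=> r0 x0; transitivity (x `^ r <= 1 `^ r); first by rewrite powR1.
apply/idP/idP => [|x1]; last by rewrite ge0_ler_powR ?nnegrE// ltW.
by apply: contraTT; rewrite -!ltNge => x1; rewrite gt0_ltr_powR ?nnegrE.
Qed.

Lemma poweR_le1 (x : \bar R) (r : R) :
  0 < r -> (0 <= x)%E -> (poweR x r <= 1)%E = (x <= 1)%E.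
Proof.
move=> r0; case: x => [x x0| _|//]; first by rewrite poweR_EFin !lee_fin powR_le1.
by rewrite poweRyr ?gt_eqF// !leNgt !ltey.
Qed.

Lemma harmonic_sum_unbounded (M : R) :
  exists K, M < \sum_(1 <= n < K) (n%:R)^-1.
Proof.
have hnd : nondecreasing_seq (series (@harmonic R)).
  by apply: nondecreasing_series => n _ _; exact: harmonic_ge0.
have := nondecreasing_dvgn_lt hnd (@dvg_harmonic R).
move=> /cvgryPgt/(_ M)/filter_ex[K MK].
by exists K.+1; rewrite big_add1.
Qed.

End Powers.

Section LorentzBall.
Variable R : realType.
Implicit Types (p q : \bar R) (a : nat -> R).
Local Open Scope ereal_scope.

Definition lorentz_term p (r : R) a (n : nat) : \bar R :=
  poweR (decr_rearr a n) r * (n%:R `^ (r * einv p - 1))%:E.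

Lemma lorentz_term_ge0 p r a n : 0 <= lorentz_term p r a n.
Proof. by rewrite mule_ge0 ?poweR_ge0// lee_fin powR_ge0. Qed.

Lemma lorentz_ball_sum_le1 p (r : R) a : (0 < r)%R -> lorentz_ball p r%:E a ->
  forall K, \sum_(1 <= n < K) lorentz_term p r a n <= 1.
Proof.
move=> r0; rewrite /lorentz_ball /lorentz_norm /= poweR_le1 ?invr_gt0//; last first.
  by apply: nneseries_ge0 => n _ _; exact: lorentz_term_ge0.
move=> a1 K; apply: le_trans a1.
by apply: nneseries_lim_ge => n _ _; exact: lorentz_term_ge0.
Qed.

Lemma lorentz_ball_weak_le1 p a : lorentz_ball p +oo a ->
  forall n, (1 <= n)%N -> (n%:R `^ einv p)%:E * decr_rearr a n <= 1.
Proof. by move=> a1 n n1; apply: le_trans a1; apply: ereal_sup_ubound; exists n. Qed.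

Lemma lorentz_ball_decr_rearr1 p q a : 0 < q -> lorentz_ball p q a ->
  decr_rearr a 1 <= 1.
Proof.
case: q => [r| |//]; rewrite ?lte_fin => q0 a1.
  have := lorentz_ball_sum_le1 q0 a1 2.
  by rewrite big_nat1 /lorentz_term powR1 mule1 poweR_le1 //; exact: decr_rearr_ge0.
by have := lorentz_ball_weak_le1 a1 (leqnn 1); rewrite powR1 mul1e.
Qed.

Lemma einv_ge0 p : 0 < p -> (0 <= einv p)%R.
Proof. by case: p => [P| |] //=; rewrite lte_fin => P0; rewrite invr_ge0 ltW. Qed.

(* If a^*_n >= e for all n, the series dominates e^r times the harmonic series. *)
Lemma lorentz_ball_fin_decr_rearr_lt p (r : R) a : 0 < p -> (0 < r)%R ->
  lorentz_ball p r%:E a -> forall e : R, (0 < e)%R ->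
  exists n, decr_rearr a n < e%:E.
Proof.
move=> p0 r0 a1 e e0; apply: contrapT => /forallNP a_ge.
have term_ge n : (1 <= n)%N -> ((e `^ r) * n%:R^-1)%:E <= lorentz_term p r a n.
  move=> n1; rewrite EFinM; apply: lee_pmul; rewrite ?lee_fin ?powR_ge0 ?invr_ge0//.
    rewrite -poweR_EFin gt0_ler_poweR ?(ltW r0)// ?in_itv/= ?leey ?andbT.
    - by rewrite lee_fin ltW.
    - exact: decr_rearr_ge0.
    - by rewrite leNgt; apply/negP/a_ge.
  rewrite -powR_inv1 ?ler0n// ler_powR ?(ler_nat _ 1 n)//.
  by rewrite lerBrDr addrC subrr mulr_ge0 ?(ltW r0) ?einv_ge0.
have [K K_gt] := harmonic_sum_unbounded (e `^ r)^-1.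
suff : 1 < \sum_(1 <= n < K) lorentz_term p r a n.
  by rewrite ltNge lorentz_ball_sum_le1.
apply: (@lt_le_trans _ _ (\sum_(1 <= n < K) ((e `^ r) * n%:R^-1)%:E)).
  rewrite sumEFin lte_fin -mulr_sumr -ltr_pdivrMl ?powR_gt0// mulr1.
  exact: K_gt.
by rewrite !big_nat; apply: lee_sum => n /andP[n1 _]; exact: term_ge.
Qed.

Lemma lorentz_ball_weak_decr_rearr_lt (P : R) a : (0 < P)%R ->
  lorentz_ball P%:E +oo a -> forall e : R, (0 < e)%R ->
  exists n, decr_rearr a n < e%:E.
Proof.
move=> P0 a1 e e0; apply: contrapT => /forallNP a_ge.
have /filter_ex[n n_gt] := nbhs_infty_gtr (e^-1 `^ P).
have n1 : (1 <= n)%N by rewrite -(ltr0n R) (le_lt_trans _ n_gt)// powR_ge0.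
have : (n%:R `^ P^-1 * e <= 1)%R.
  rewrite -lee_fin; apply: le_trans (lorentz_ball_weak_le1 a1 n1).
  by rewrite EFinM lee_wpmul2l ?lee_fin ?powR_ge0// leNgt; apply/negP/a_ge.
rewrite -ler_pdivlMr // mul1r => /(ge0_ler_powR (ltW P0)).
rewrite !nnegrE powR_ge0 invr_ge0 (ltW e0) -powRrM mulVf ?gt_eqF// powRr1 ?ler0n//.
by move=> /(_ isT isT); rewrite leNgt n_gt.
Qed.

Lemma lorentz_ball_c0 p q a : 0 < p -> 0 < q -> p < +oo \/ q < +oo ->
  lorentz_ball p q a -> c0 a.
Proof.
move=> p0 q0 pq a1; apply: c0_decr_rearr_lt.
case: q q0 pq a1 => [r r0 _ a1| _ [|//] |//].
  exact: lorentz_ball_fin_decr_rearr_lt a1.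
by case: p p0 => [P P0 _|//|//]; exact: lorentz_ball_weak_decr_rearr_lt.
Qed.

End LorentzBall.

Section Embedding.
Variable R : realType.
Implicit Types (p q : \bar R) (a : nat -> R).
Local Open Scope ereal_scope.

Definition basis_seq (N : nat) : nat -> R := fun k => (k == N)%:R.

Lemma basis_seq_lorentz_ball p q N : 0 < q -> lorentz_ball p q (basis_seq N).
Proof.
have e_le1 k : (`|basis_seq N k| <= 1)%R.
  by rewrite /basis_seq; case: eqP; rewrite ?normr1 ?normr0.
have e1 : decr_rearr (basis_seq N) 1 <= 1 := decr_rearr1_le ltr01 e_le1.
have e_gt1 n : (1 < n)%N -> decr_rearr (basis_seq N) n = 0.
  apply: (@decr_rearr_finite_support _ _ [:: N]) => k.
  by rewrite mem_seq1 /basis_seq => /negbTE ->.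
case: q => [r| |//]; rewrite ?lte_fin => r0; rewrite /lorentz_ball /lorentz_norm /=.
  rewrite poweR_le1 ?invr_gt0 ?nneseries_ge0//; last first.
    by move=> n _ _; exact: lorentz_term_ge0.
  rewrite (nneseries_split _ 1); last by move=> n _; exact: lorentz_term_ge0.
  rewrite eseries0 ?adde0; last first.
    by move=> n n2 _; rewrite /lorentz_term e_gt1// poweR0r ?gt_eqF// mul0e.
  rewrite big_nat1 /lorentz_term powR1 mule1 poweR_le1 //; exact: decr_rearr_ge0.
apply/ereal_supP => _ [[|[|n]] //= _ <-]; first by rewrite powR1 mul1e.
by rewrite e_gt1// mule0.
Qed.

Lemma le_supnorm a k : (`|a k|)%:E <= supnorm a.
Proof. by apply: ereal_sup_ubound; exists k. Qed.

Lemma lorentz_ball_supnorm p q a : 0 < q -> lorentz_ball p q a -> supnorm a <= 1.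
Proof.
move=> q0 a1; apply/ereal_supP => _ [k _ <-].
exact: le_trans (norm_le_decr_rearr1 a k) (lorentz_ball_decr_rearr1 q0 a1).
Qed.

Lemma embed_norm_eq1 p q : 0 < q -> embed_norm p q = 1.
Proof.
move=> q0; apply/eqP; rewrite eq_le; apply/andP; split.
  by apply/ereal_supP => _ [a a1 <-]; exact: lorentz_ball_supnorm a1.
have <- : (`|basis_seq 0 0|)%:E = 1 by rewrite /basis_seq eqxx normr1.
apply: le_trans (le_supnorm _ 0) _.
by apply: ereal_sup_ubound; exists (basis_seq 0) => //; exact: basis_seq_lorentz_ball.
Qed.

Lemma c0_seq_eventually_lt (ys : seq (nat -> R)) (r : R) :
  (forall y, y \in ys -> c0 y) -> (0 < r)%R ->
  \forall k \near \oo, forall y, y \in ys -> (`|y k| < r)%R.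
Proof.
move=> ys_c0 r0; elim: ys ys_c0 => [_|y ys IH ys_c0]; first by near=> k.
have /cvgr0Pnorm_lt/(_ r r0) y_lt := ys_c0 y (mem_head _ _).
have /IH ys_lt : forall z, z \in ys -> c0 z.
  by move=> z zs; apply: ys_c0; rewrite in_cons zs orbT.
near=> k => z; rewrite in_cons => /predU1P[->|zs]; first by near: k.
by move: z zs; near: k.
Unshelve. all: by end_near.
Qed.

Lemma embed_alpha_le1 p q : 0 < p -> 0 < q -> p < +oo \/ q < +oo ->
  embed_alpha p q <= 1.
Proof.
move=> p0 q0 pq; apply: ereal_inf_lbound; exists 1%R => //; split => //.
exists [:: 0%R : nat -> R]; split => [y|a a1].
  by rewrite mem_seq1 => /eqP ->; exact: cvg_cst.
exists 0%R; first by rewrite mem_seq1.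
exists a; split; first exact: lorentz_ball_c0 a1.
by split; [exact: lorentz_ball_supnorm a1 | rewrite add0r scale1r].
Qed.

Lemma embed_alpha_ge1 p q : 0 < q -> 1 <= embed_alpha p q.
Proof.
move=> q0; apply/ereal_infP => _ [r [r0 [ys [ys_c0 cover]]] <-].
rewrite lee_fin leNgt; apply/negP => r1.
have r1' : (0 < 1 - r)%R by rewrite subr_gt0.
have /filter_ex[N ys_small] := c0_seq_eventually_lt ys_c0 r1'.
have [y yys [b [_ [b1 eN]]]] := cover _ (basis_seq_lorentz_ball p N q0).
have bN : (`|b N| <= 1)%R by rewrite -lee_fin (le_trans (le_supnorm b N)).
have : (1 <= `|y N| + r)%R.
  have eN1 : (y N + r * b N = 1)%R.
    by move/(congr1 (fun f => f N)): eN; rewrite /basis_seq eqxx => /esym.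
  rewrite -normr1 -eN1 (le_trans (ler_normD _ _))// lerD2l normrM gtr0_norm//.
  by rewrite -[leRHS]mulr1 ler_pM2l.
by rewrite leNgt -ltrBrDr ys_small.
Qed.

End Embedding.

Theorem mainTheorem11 (R : realType) (p q : \bar R) :
  (0 < p)%E -> (0 < q)%E -> (p < +oo)%E \/ (q < +oo)%E ->
  embed_alpha p q = embed_norm p q.
Proof.
move=> p0 q0 pq; rewrite embed_norm_eq1//.
by apply/eqP; rewrite eq_le embed_alpha_le1// embed_alpha_ge1.
Qed.
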